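(* Suppose that $E_Q[\xi\mid\mathcal G]\in L_{\mathcal F}$ for every $Q\in L_{\mathcal F}^*\cap\mathcal P_{\mathcal G}$ and every $\xi\in L_{\mathcal F}$. Let $Q\in L_{\mathcal F}^*\cap\mathcal P_{\mathcal G}$ and let $\pi:L_{\mathcal F}\to L_{\mathcal G}$ satisfy (MON) and (REG). Then for every $X\in L_{\mathcal F}$ \[ K(X,Q)=\inf_{\xi\in L_{\mathcal F}}\big\{\pi(\xi)\ \big|\ E_Q[\xi\mid\mathcal G]=E_Q[X\mid\mathcal G]\big\}, \] where $K(X,Q):=\inf_{\xi\in L_{\mathcal F}}\{\pi(\xi)\mid E_Q[\xi\mid\mathcal G]\ge E_Q[X\mid\mathcal G]\}$.
   Context: Let $(\Omega,\mathcal F,\mathbb P)$ be a probability space and $\mathcal G\subseteq\mathcal F$ a sub-$\sigma$-algebra. (In)equalities between random variables hold $\mathbb P$-a.s.; $\inf$ denotes the $\mathbb P$-essential infimum. Standing assumptions: $L_{\mathcal F}\subseteq L^0(\Omega,\mathcal F,\mathbb P)$, $L_{\mathcal G}\subseteq L^0(\Omega,\mathcal G,\mathbb P)$ are vector lattices closed under multiplication by indicators of $\mathcal F$- (resp. $\mathcal G$-) measurable sets; the order continuous dual $L^*_{\mathcal F}$ of $(L_{\mathcal F},\ge)$ is a lattice contained in $L^1(\Omega,\mathcal F,\mathbb P)$ (functionals $X\mapsto E_{\mathbb P}[ZX]$), closed under multiplication by indicators of sets in $\mathcal F$; $(L_{\mathcal F},\sigma(L_{\mathcal F},L^*_{\mathcal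 F}))$ is a locally convex Riesz space. $\mathcal P_{\mathcal G}$ is the set of probabilities $Q\ll\mathbb P$ with $Q=\mathbb P$ on $\mathcal G$ (identified with densities $dQ/d\mathbb P$); for such $Q$, comparisons of $\mathcal G$-measurable variables hold equivalently $Q$-a.s. or $\mathbb P$-a.s. (MON): $X\le Y\Rightarrow \pi(X)\le\pi(Y)$. (REG): $\pi(X\mathbf 1_A+Y\mathbf 1_{A^c})=\pi(X)\mathbf 1_A+\pi(Y)\mathbf 1_{A^c}$ for $X,Y\in L_{\mathcal F}$, $A\in\mathcal G$. *)

From HB Require Import structures.
From mathcomp Require Import all_boot all_order all_algebra.
From mathcomp Require Import all_classical all_reals all_analysis.
From mathcomp Require Import measurable_realfun.
Set Implicit Arguments. Unset Strict Implicit. Unset Printing Implicit Defensive.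
Import Order.TTheory GRing.Theory Num.Theory.
Local Open Scope classical_set_scope.
Local Open Scope ring_scope.

Section Defs.
Context {R : realType} {d : measure_display} {T : measurableType d}.
Variable P : probability T R.

Definition Gmeas (G : set (set T)) (f : T -> R) :=
  forall B : set R, measurable B -> G (f @^-1` B).

Definition sub_sigma (G : set (set T)) :=
  sigma_algebra setT G /\ G `<=` measurable.

(** Elements of L^0 are identified up to P-a.s. equality; a set of
    representatives [L] is "closed under a.s. modification". *)
Definition ae_closed (meas : (T -> R) -> Prop) (L : set (T -> R)) :=
  forall X Y, L X -> meas Y -> {ae P, forall w, X w = Y w} -> L Y.

Definition vlattice (S : set (set T)) (meas : (T -> R) -> Prop)
  (L : set (T -> R)) :=
  [/\ L (fun _ => 0),
      (forall X Y, L X -> L Y -> L (fun w => X w + Y w)),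
      (forall (c : R) X, L X -> L (fun w => c * X w)),
      (forall X Y, L X -> L Y -> L (fun w => Num.max (X w) (Y w))) &
      [/\ (forall X A, L X -> S A -> L (fun w => X w * \1_A w)),
      (forall X, L X -> meas X) & ae_closed meas L]].

Definition Fmeas (f : T -> R) := measurable_fun setT f.

Definition EP (f : T -> R) : \bar R := \int[P]_w (f w)%:E.

(** The order continuous dual of (L_F, >=), represented (standing assumption)
    by densities Z in L^1 acting via X |-> E_P[Z X]: a functional is order
    continuous iff for every downward directed family D in L_F with infimum 0
    in L_F, inf_{X in D} |E[Z X]| = 0. *)
Definition ocdual (LF : set (T -> R)) : set (T -> R) :=
  [set Z | [/\ Fmeas Z, P.-integrable setT (EFin \o Z),
    (forall X, LF X -> P.-integrable setT (fun w => (Z w * X w)%:E)) &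
    (forall D : set (T -> R), D `<=` LF -> D !=set0 ->
       (forall X Y, D X -> D Y -> exists2 W, D W &
          {ae P, forall w, W w <= X w} /\ {ae P, forall w, W w <= Y w}) ->
       (forall X, D X -> {ae P, forall w, 0 <= X w}) ->
       (forall V, LF V -> (forall X, D X -> {ae P, forall w, V w <= X w}) ->
          {ae P, forall w, V w <= 0}) ->
       forall eps : R, 0 < eps -> exists2 X, D X &
          (`| fine (EP (fun w => Z w * X w)) | < eps))]].

(** Densities dQ/dP of probabilities Q << P with Q = P on G. *)
Definition PG (G : set (set T)) : set (T -> R) :=
  [set Z | [/\ Fmeas Z, {ae P, forall w, 0 <= Z w},
     P.-integrable setT (EFin \o Z), (\int[P]_w (Z w)%:E = 1)%E &
     forall A, G A -> (\int[P]_(w in A) (Z w)%:E = P A)%E]].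

(** [Y] is a version of E_Q[xi | G], where Z = dQ/dP. *)
Definition is_condexp (G : set (set T)) (Z xi Y : T -> R) :=
  [/\ Gmeas G Y,
      P.-integrable setT (fun w => (Z w * xi w)%:E),
      P.-integrable setT (fun w => (Z w * Y w)%:E) &
      forall A, G A -> (\int[P]_(w in A) (Z w * Y w)%:E =
                       \int[P]_(w in A) (Z w * xi w)%:E)%E].

Definition is_essinf (S : set (T -> R)) (Y : T -> \bar R) :=
  [/\ measurable_fun setT Y,
      (forall f, S f -> {ae P, forall w, (Y w <= (f w)%:E)%E}) &
      (forall Y' : T -> \bar R, measurable_fun setT Y' ->
         (forall f, S f -> {ae P, forall w, (Y' w <= (f w)%:E)%E}) ->
         {ae P, forall w, (Y' w <= Y w)%E})].

Definition essinf (S : set (T -> R)) : T -> \bar R :=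
  xget (fun _ => +oo%E) [set Y | is_essinf S Y].

Definition MON (LF : set (T -> R)) (pi : (T -> R) -> (T -> R)) :=
  forall X Y, LF X -> LF Y -> {ae P, forall w, X w <= Y w} ->
    {ae P, forall w, pi X w <= pi Y w}.

Definition REG (G : set (set T)) (LF : set (T -> R))
    (pi : (T -> R) -> (T -> R)) :=
  forall X Y A, LF X -> LF Y -> G A ->
    {ae P, forall w, pi (fun v => X v * \1_A v + Y v * \1_(~` A) v) w =
                     pi X w * \1_A w + pi Y w * \1_(~` A) w}.

Definition K (G : set (set T)) (LF : set (T -> R))
    (pi : (T -> R) -> (T -> R)) (X Z : T -> R) : T -> \bar R :=
  essinf [set pi xi | xi in [set xi | LF xi /\ exists YX Yxi,
     [/\ is_condexp G Z X YX, is_condexp G Z xi Yxi &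
         {ae P, forall w, YX w <= Yxi w}]]].

Definition Keq (G : set (set T)) (LF : set (T -> R))
    (pi : (T -> R) -> (T -> R)) (X Z : T -> R) : T -> \bar R :=
  essinf [set pi xi | xi in [set xi | LF xi /\ exists YX Yxi,
     [/\ is_condexp G Z X YX, is_condexp G Z xi Yxi &
         {ae P, forall w, YX w = Yxi w}]]].

End Defs.

From HB Require Import structures.
From mathcomp Require Import all_boot all_order all_algebra.
From mathcomp Require Import all_classical all_reals all_analysis.
From mathcomp Require Import measurable_realfun.
From mathcomp Require Import lra ring.
Set Implicit Arguments. Unset Strict Implicit. Unset Printing Implicit Defensive.
Import Order.TTheory GRing.Theory Num.Theory.
Local Open Scope classical_set_scope.
Local Open Scope ring_scope.

(* If [E_Q[xi|G] >= E_Q[X|G]], then [xi' := xi - E_Q[xi|G] + E_Q[X|G]] lies in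
   L_F, satisfies [E_Q[xi'|G] = E_Q[X|G]] and [xi' <= xi], so by monotonicity
   [pi(xi') <= pi(xi)].  Hence both constraint sets have the same lower bounds
   and thus the same essential infimum. *)

Section essinf.
Context {R : realType} {d : measure_display} {T : measurableType d}.
Variable P : probability T R.

Lemma eq_essinf (S1 S2 : set (T -> R)) :
  (forall Y : T -> \bar R,
     (forall f, S1 f -> {ae P, forall w, (Y w <= (f w)%:E)%E}) <->
     (forall f, S2 f -> {ae P, forall w, (Y w <= (f w)%:E)%E})) ->
  essinf P S1 = essinf P S2.
Proof.
move=> lbE; rewrite /essinf; congr (xget _ _).
apply/funext => Y; apply/propext.
split=> -[mY lbY gtY]; split=> // [|Y' mY' /(lbE Y') /(gtY _ mY') //].
all: exact/(lbE Y).
Qed.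

End essinf.

Section conditional_expectation.
Context {R : realType} {d : measure_display} {T : measurableType d}.
Variables (P : probability T R) (G : set (set T)).
Hypothesis HG : sub_sigma G.

Lemma Gmeas_measurable (f : T -> R) : Gmeas G f -> measurable_fun setT f.
Proof. by move=> Gf _ B mB; rewrite setTI; apply: HG.2; exact: Gf. Qed.

Lemma Gmeas_lt (f g : T -> R) :
  Gmeas G f -> Gmeas G g -> G [set w | f w < g w].
Proof.
have mG (h : T -> R) : Gmeas G h ->
    measurable_fun (setT : set (g_sigma_algebraType G)) h.
  by move=> Gh _ B mB; rewrite setTI; apply: sub_sigma_algebra; exact: Gh.
move=> Gf Gg; have := measurable_fun_le measurableT (mG _ Gg) (mG _ Gf).
move/measurableC; rewrite setTI [X in X _ -> _]sigma_algebra_id; last exact: HG.1.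
by congr G; apply/seteqP; split=> w /=; rewrite ltNge => /negP.
Qed.

Lemma PG_measure_eq0 (Z : T -> R) (A : set T) : PG P G Z -> G A ->
  {ae P, forall w, A w -> Z w = 0} -> P A = 0%E.
Proof.
move=> [mZ _ _ _ ZA] GA Z0; rewrite -ZA // -(integral0 P A).
apply: ae_eq_integral => //; first exact: HG.2.
by apply/measurable_EFinP; exact: measurable_funS mZ.
by apply: filterS Z0 => w + Aw => ->.
Qed.

(* On [A = {Y2 < Y1}] the G-set property gives [int_A Z (Y1 - Y2) dP = 0], so
   [Z = 0] a.e. on [A]; as [Q = P] on G, [P A = Q A = 0]. *)
Lemma is_condexp_le (Z xi Y1 Y2 : T -> R) : PG P G Z ->
  is_condexp P G Z xi Y1 -> is_condexp P G Z xi Y2 ->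
  {ae P, forall w, Y1 w <= Y2 w}.
Proof.
move=> QG [G1 ixi iY1 e1] [G2 _ iY2 e2].
have [mZ Z0 _ _ _] := QG.
pose A := [set w | Y2 w < Y1 w].
have GA : G A by exact: Gmeas_lt.
have mA : measurable A by exact: HG.2.
pose h w := (Z w * (Y1 w - Y2 w))%:E.
have mh : measurable_fun A h.
  apply/measurable_EFinP; apply: measurable_funM; first exact: measurable_funS mZ.
  by apply: measurable_funB; [apply: measurable_funS (Gmeas_measurable G1)
                             | apply: measurable_funS (Gmeas_measurable G2)].
have intA_h : (\int[P]_(w in A) h w = 0)%E.
  have iA f : P.-integrable setT f -> P.-integrable A f.
    by move=> if_; exact: integrableS if_.
  rewrite /h (eq_integral (fun w => (Z w * Y1 w)%:E - (Z w * Y2 w)%:E))%E; last first.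
    by move=> w _; rewrite -EFinB mulrBr.
  rewrite (integralB_EFin mA (iA _ iY1) (iA _ iY2)) (e1 A GA) (e2 A GA) subee //.
  by apply: integrable_fin_num => //; exact: iA.
have h0 : {ae P, forall w, A w -> h w = 0%E}.
  apply/(ae_eq_integral_abs P mA mh); rewrite -intA_h.
  apply: ae_eq_integral => //; first exact: measurableT_comp.
  apply: filterS Z0 => w Zw Aw.
  by rewrite gee0_abs // lee_fin mulr_ge0 // subr_ge0 ltW.
have PA0 : P A = 0%E.
  apply: (PG_measure_eq0 QG GA); apply: filterS h0 => w hw Aw.
  move: (hw Aw) => /eqP; rewrite eqe mulf_eq0 subr_eq0 => /orP[/eqP // | /eqP E].
  by move: Aw; rewrite /A /= E ltxx.
have [N [mN PN0 AN]] := (negligibleP _ mA).2 PA0.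
by exists N; split => // w /negP; rewrite -ltNge => /AN.
Qed.

Lemma is_condexp_shift (Z xi Yxi X YX : T -> R) :
  is_condexp P G Z xi Yxi -> is_condexp P G Z X YX ->
  is_condexp P G Z (fun w => xi w - Yxi w + YX w) YX.
Proof.
move=> [_ ixi iYxi exi] [GYX _ iYX _].
have iS (A : set T) f : measurable A -> P.-integrable setT f -> P.-integrable A f.
  by move=> mA if_; exact: integrableS if_.
have ZxiE w : (Z w * (xi w - Yxi w + YX w))%:E =
    ((Z w * xi w)%:E - (Z w * Yxi w)%:E + (Z w * YX w)%:E)%E.
  by rewrite -EFinB -EFinD; congr (_%:E); ring.
have idiff A : measurable A ->
    P.-integrable A (fun w => (Z w * xi w)%:E - (Z w * Yxi w)%:E)%E.
  by move=> mA; apply: (integrableB mA); exact: iS.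
split => //.
  apply: (eq_integrable measurableT) (integrableD measurableT (idiff _ measurableT) iYX).
  by move=> w _; rewrite ZxiE.
move=> A GA; have mA : measurable A by exact: HG.2.
under [RHS]eq_integral do rewrite ZxiE.
rewrite (integralD mA (idiff _ mA) (iS _ _ mA iYX)).
rewrite (integralB_EFin mA (iS _ _ mA ixi) (iS _ _ mA iYxi)) exi //.
by rewrite subee ?add0e //; apply: integrable_fin_num => //; exact: iS.
Qed.

End conditional_expectation.

Section vlattice.
Context {R : realType} {d : measure_display} {T : measurableType d}.
Variables (P : probability T R) (S : set (set T)) (meas : (T -> R) -> Prop).
Variable L : set (T -> R).
Hypothesis HL : vlattice P S meas L.

Lemma vlatticeD X Y : L X -> L Y -> L (fun w => X w + Y w).
Proof. by case: HL => _ HD _ _ _; exact: HD. Qed.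

Lemma vlatticeB X Y : L X -> L Y -> L (fun w => X w - Y w).
Proof.
case: HL => _ _ HZ _ _ LX LY.
have -> : (fun w => X w - Y w) = (fun w => X w + (-1) * Y w).
  by apply/funext => w; rewrite mulN1r.
by apply: vlatticeD => //; exact: HZ.
Qed.

End vlattice.

Section shift_to_equality.
Context {R : realType} {d : measure_display} {T : measurableType d}.
Variables (P : probability T R) (G : set (set T)) (LF : set (T -> R)).
Variable Z : T -> R.
Hypotheses (HG : sub_sigma G) (HLF : vlattice P measurable Fmeas LF).
Hypothesis Hcond : forall Q xi, ocdual P LF Q -> PG P G Q -> LF xi ->
  exists2 Y, LF Y & is_condexp P G Q xi Y.
Hypotheses (HQ : ocdual P LF Z) (HQG : PG P G Z).

Lemma exists_eq_condexp_le X xi YX Yxi : LF X -> LF xi ->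
  is_condexp P G Z X YX -> is_condexp P G Z xi Yxi ->
  {ae P, forall w, YX w <= Yxi w} ->
  exists2 xi', LF xi' /\ exists Y, is_condexp P G Z X Y /\ is_condexp P G Z xi' Y
    & {ae P, forall w, xi' w <= xi w}.
Proof.
move=> LX Lxi cX cxi le_X_xi.
have [YX' LYX' cX'] := Hcond HQ HQG LX.
have [Yxi' LYxi' cxi'] := Hcond HQ HQG Lxi.
have le_YX'_Yxi' : {ae P, forall w, YX' w <= Yxi' w}.
  apply: filterS3 (is_condexp_le HG HQG cX' cX) le_X_xi
                  (is_condexp_le HG HQG cxi cxi') => w h1 h2 h3.
  exact: le_trans h1 (le_trans h2 h3).
exists (fun w => xi w - Yxi' w + YX' w).
  split; first exact (vlatticeD HLF (vlatticeB HLF Lxi LYxi') LYX').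
  by exists YX'; split => //; exact (is_condexp_shift HG cxi' cX').
by apply: filterS le_YX'_Yxi' => w; lra.
Qed.

End shift_to_equality.

Theorem lemma14 (R : realType) (d : measure_display) (T : measurableType d)
  (P : probability T R) (G : set (set T))
  (LF LG : set (T -> R)) (pi : (T -> R) -> (T -> R)) (Z : T -> R)
  (HG : sub_sigma G)
  (HLF : vlattice P measurable Fmeas LF)
  (HLG : vlattice P G (Gmeas G) LG)
  (Hdual_lat : forall Z1 Z2, ocdual P LF Z1 -> ocdual P LF Z2 ->
      ocdual P LF (fun w => Num.max (Z1 w) (Z2 w)))
  (Hdual_vs : forall (c : R) Z1 Z2, ocdual P LF Z1 -> ocdual P LF Z2 ->
      ocdual P LF (fun w => c * Z1 w + Z2 w))
  (Hdual_ind : forall Z1 A, ocdual P LF Z1 -> measurable A ->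
      ocdual P LF (fun w => Z1 w * \1_A w))
  (Hpi : forall X, LF X -> LG (pi X))
  (Hcond : forall Q xi, ocdual P LF Q -> PG P G Q -> LF xi ->
      exists2 Y, LF Y & is_condexp P G Q xi Y)
  (HQ : ocdual P LF Z) (HQG : PG P G Z)
  (Hmon : MON P LF pi) (Hreg : REG P G LF pi) :
  forall X, LF X -> {ae P, forall w, K P G LF pi X Z w = Keq P G LF pi X Z w}.
Proof.
move=> X LX; apply: aeW => w; congr (_ w); apply: eq_essinf => Y; split.
- move=> lbK _ [xi [Lxi [YX [Yxi [cX cxi eq_X_xi]]]] <-]; apply: lbK.
  exists xi => //; split => //; exists YX, Yxi; split => //.
  by apply: filterS eq_X_xi => v ->.
- move=> lbKeq _ [xi [Lxi [YX [Yxi [cX cxi le_X_xi]]]] <-].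
  have [xi' [Lxi' [Y' [cX' cxi']]] le_xi'] :=
    exists_eq_condexp_le HG HLF Hcond HQ HQG LX Lxi cX cxi le_X_xi.
  have lb_xi' : {ae P, forall v, (Y v <= (pi xi' v)%:E)%E}.
    apply: lbKeq; exists xi' => //; split => //; exists Y', Y'.
    by split => //; exact: aeW.
  apply: filterS2 lb_xi' (Hmon _ _ Lxi' Lxi le_xi') => v lb_v mon_v.
  by apply: le_trans lb_v _; rewrite lee_fin.
Qed.
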